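(* Let $C$ be a nonempty closed convex subset of a real Hilbert space $H$, and let $A,F:H\to H$ be Lipschitz continuous with constants $L_A,L_F$, respectively. Assume that $A$ is $\lambda$-strongly monotone for some $\lambda>0$ and that the couple $(A,F)$ is $\gamma$-strongly monotone on $H$ for some $\gamma>0$. Then $\mathrm{GVI}(A,F,C)$ admits a unique solution in $H$.
   Context: $\mathrm{GVI}(A,F,C)$: find $x^*\in H$ with $Fx^*\in C$ and $\langle Ax^*,y-Fx^*\rangle\ge0$ for all $y\in C$. $A$ is $\lambda$-strongly monotone if $\langle Ax-Ay,x-y\rangle\ge\lambda\|x-y\|^2$ for all $x,y$. The couple $(A,F)$ is $\gamma$-strongly monotone if $\langle Ax-Ay,Fx-Fy\rangle\ge\gamma\|x-y\|^2$ for all $x,y\in H$. *)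

From HB Require Import structures.
From mathcomp Require Import all_boot all_order all_algebra.
From mathcomp Require Import all_classical all_reals all_analysis.
Set Implicit Arguments. Unset Strict Implicit. Unset Printing Implicit Defensive.
Import Order.TTheory GRing.Theory Num.Theory.
Import numFieldNormedType.Exports.
Local Open Scope classical_set_scope.
Local Open Scope ring_scope.

(* [ip] is a real inner product on the normed space H inducing its norm:
   symmetric, linear in the first argument, and <x,x> = ||x||^2.
   Together with completeness of H (completeNormedModType) this makes
   (H, ip) a real Hilbert space. *)
Definition is_inner_product (R : realType) (H : normedModType R)
  (ip : H -> H -> R) : Prop :=
  [/\ (forall x y, ip x y = ip y x),
      (forall (a : R) (x y z : H), ip (a *: x + y) z = a * ip x z + ip y z)
    & (forall x, ip x x = `|x| ^+ 2)].

Definition lipschitz_with (R : realType) (H : normedModType R)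
  (L : R) (A : H -> H) : Prop :=
  forall x y, `|A x - A y| <= L * `|x - y|.

Definition strongly_monotone (R : realType) (H : normedModType R)
  (ip : H -> H -> R) (lam : R) (A : H -> H) : Prop :=
  forall x y, ip (A x - A y) (x - y) >= lam * `|x - y| ^+ 2.

Definition couple_strongly_monotone (R : realType) (H : normedModType R)
  (ip : H -> H -> R) (gam : R) (A F : H -> H) : Prop :=
  forall x y, ip (A x - A y) (F x - F y) >= gam * `|x - y| ^+ 2.

Definition GVI_sol (R : realType) (H : normedModType R)
  (ip : H -> H -> R) (A F : H -> H) (C : set H) (x : H) : Prop :=
  C (F x) /\ forall y, C y -> 0 <= ip (A x) (y - F x).

From HB Require Import structures.
From mathcomp Require Import all_boot all_order all_algebra.
From mathcomp Require Import all_classical all_reals all_analysis.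
From mathcomp Require Import ring lra.
Set Implicit Arguments. Unset Strict Implicit. Unset Printing Implicit Defensive.
Import Order.TTheory GRing.Theory Num.Theory.
Import numFieldNormedType.Exports.
Local Open Scope classical_set_scope.
Local Open Scope ring_scope.

(* Let P be the metric projection onto C. For rho > 0, x solves GVI(A,F,C) as
   soon as the residual G x := F x - P (F x - rho A x) vanishes. A strongly
   monotone Lipschitz operator M is onto, because x |-> x - r (M x - b) is a
   contraction for small r > 0; in particular A is a bijection. Firm
   nonexpansiveness of P together with the strong monotonicity of the couple
   (A,F) shows that, for rho = (L_F^2 + 1) / gamma, the map G o A^-1 is again
   strongly monotone and Lipschitz, hence has a zero. Uniqueness follows
   directly from the strong monotonicity of (A,F). *)

Definition is_proj (R : realType) (H : normedModType R) (ip : H -> H -> R)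
  (C : set H) (u c : H) : Prop :=
  C c /\ forall y, C y -> ip (u - c) (y - c) <= 0.

Definition gvi_residual (R : realType) (H : normedModType R) (rho : R)
  (A F P : H -> H) (x : H) : H :=
  F x - P (F x - rho *: A x).

Lemma subrACA (V : zmodType) (a b c d : V) : (a - b) - (c - d) = (a - c) - (b - d).
Proof. by rewrite !opprB [d - c]addrC addrACA [- b + d]addrC. Qed.

Lemma sqr_normZ (R : realType) (H : normedModType R) (a : R) (x : H) :
  `|a *: x| ^+ 2 = a ^+ 2 * `|x| ^+ 2.
Proof. by rewrite normrZ exprMn real_normK ?num_real. Qed.

Lemma lipschitz_with_sqr (R : realType) (H : normedModType R) (L : R) (f : H -> H) :
  lipschitz_with L f -> forall x y, `|f x - f y| ^+ 2 <= L ^+ 2 * `|x - y| ^+ 2.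
Proof.
move=> lipf x y; rewrite -exprMn; apply: lerXn2r; rewrite ?nnegrE //.
exact: le_trans (lipf x y).
Qed.

Lemma mem_convex_comb (R : numDomainType) (M : lmodType R) (C : set M) (x y : M) (t : R) :
  convex_set C -> C x -> C y -> 0 <= t -> t <= 1 -> C (t *: x + (1 - t) *: y).
Proof. by move=> cvC Cx Cy t0 t1; have := cvC x y (Itv01 t0 t1); rewrite !inE; apply. Qed.

Section InnerProduct.
Variables (R : realType) (H : normedModType R) (ip : H -> H -> R).
Hypothesis hip : is_inner_product ip.
Implicit Types (x y z u v a b c : H) (k : R).

Lemma ipC x y : ip x y = ip y x. Proof. by case: hip. Qed.
Lemma ipxx x : ip x x = `|x| ^+ 2. Proof. by case: hip. Qed.

Lemma ip0l z : ip 0 z = 0.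
Proof. by case: hip => _ ipZD _; have := ipZD 1 0 0 z; rewrite scaler0 addr0 mul1r; lra. Qed.

Lemma ipDl x y z : ip (x + y) z = ip x z + ip y z.
Proof. by case: hip => _ ipZD _; rewrite -[x]scale1r ipZD mul1r scale1r. Qed.

Lemma ipZl k x z : ip (k *: x) z = k * ip x z.
Proof. by case: hip => _ ipZD _; rewrite -[k *: x]addr0 ipZD ip0l addr0. Qed.

Lemma ipNl x z : ip (- x) z = - ip x z.
Proof. by rewrite -scaleN1r ipZl mulN1r. Qed.

Lemma ipBl x y z : ip (x - y) z = ip x z - ip y z.
Proof. by rewrite ipDl ipNl. Qed.

Lemma ip0r z : ip z 0 = 0. Proof. by rewrite ipC ip0l. Qed.
Lemma ipZr k x z : ip z (k *: x) = k * ip z x. Proof. by rewrite ipC ipZl ipC. Qed.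
Lemma ipNr x z : ip z (- x) = - ip z x. Proof. by rewrite ipC ipNl ipC. Qed.
Lemma ipBr x y z : ip z (x - y) = ip z x - ip z y. Proof. by rewrite ipC ipBl !(ipC z). Qed.
Lemma ipDr x y z : ip z (x + y) = ip z x + ip z y. Proof. by rewrite ipC ipDl !(ipC z). Qed.

Lemma sqr_normB x y : `|x - y| ^+ 2 = `|x| ^+ 2 - 2 * ip x y + `|y| ^+ 2.
Proof. by rewrite -!ipxx ipBl !ipBr [ip y x]ipC; ring. Qed.

Lemma parallelogram x y :
  `|x + y| ^+ 2 + `|x - y| ^+ 2 = 2 * `|x| ^+ 2 + 2 * `|y| ^+ 2.
Proof. by rewrite -!ipxx ipDl ipBl !ipBr !ipDr; ring. Qed.

Lemma ip_le_norm x y : ip x y <= `|x| * `|y|.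
Proof.
have [/eqP|xy_neq0] := eqVneq (`|x| * `|y|) 0.
  rewrite mulf_eq0 !normr_eq0 => /orP[]/eqP->.
    by rewrite ip0l normr0 mul0r.
  by rewrite ip0r normr0 mulr0.
have xy_gt0 : 0 < `|x| * `|y| by rewrite lt_neqAle eq_sym xy_neq0 mulr_ge0.
have := sqr_ge0 (Num.norm (`|y| *: x - `|x| *: y)).
rewrite sqr_normB !sqr_normZ ipZl ipZr => sqr_ge0_diff.
by rewrite -(ler_pM2l xy_gt0); lra.
Qed.

Lemma parallelogram_midpoint u a b :
  `|a - b| ^+ 2 + 4 * `|u - 2^-1 *: (a + b)| ^+ 2
    = 2 * `|u - a| ^+ 2 + 2 * `|u - b| ^+ 2.
Proof.
rewrite -parallelogram subrACA subrr sub0r normrN distrC addrC.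
have -> : u - a + (u - b) = 2 *: (u - 2^-1 *: (a + b)).
  by rewrite scalerBr scalerA divff ?pnatr_eq0 // scale1r scaler_nat mulr2n opprD addrACA.
by rewrite sqr_normZ; congr (_ + _); rewrite -natrX.
Qed.

Lemma nearest_is_proj (C : set H) u c : convex_set C -> C c ->
  (forall y, C y -> `|u - c| <= `|u - y|) -> is_proj ip C u c.
Proof.
move=> cvC Cc c_min; split=> // y Cy.
rewrite -[ip _ _]addr0; apply/ler_addgt0Pr => e e_gt0.
pose K := `|y - c| ^+ 2; pose t := e / (K + e).
have K_ge0 : 0 <= K by exact: sqr_ge0.
have t_gt0 : 0 < t by rewrite divr_gt0 //; lra.
have t_le1 : t <= 1 by rewrite ler_pdivrMr ?mul1r; lra.
have tK : t * K <= e by rewrite mulrAC ler_pdivrMr; nra.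
have := c_min _ (mem_convex_comb cvC Cy Cc (ltW t_gt0) t_le1).
have -> : u - (t *: y + (1 - t) *: c) = (u - c) - t *: (y - c).
  by rewrite scalerBl scale1r addrCA opprD addrA -scalerBr.
move=> /(lerXn2r 2); rewrite !nnegrE !normr_ge0 => /(_ isT isT).
rewrite (sqr_normB (u - c)) sqr_normZ ipZr -/K => le_uc.
have : t * (2 * ip (u - c) (y - c)) <= t * (t * K) by lra.
rewrite ler_pM2l // => ip_le; lra.
Qed.

Lemma proj_firmly_nonexpansive (C : set H) u v pu pv :
  is_proj ip C u pu -> is_proj ip C v pv ->
  `|pu - pv| ^+ 2 <= ip (u - v) (pu - pv).
Proof.
move=> [Cpu pu_var] [Cpv pv_var].
have := pu_var _ Cpv; have := pv_var _ Cpu.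
rewrite -[pv - pu]opprB ipNr -ipxx !ipBl; lra.
Qed.

Lemma proj_nonexpansive (C : set H) u v pu pv :
  is_proj ip C u pu -> is_proj ip C v pv -> `|pu - pv| <= `|u - v|.
Proof.
move=> proj_u proj_v.
have := proj_firmly_nonexpansive proj_u proj_v.
have := ip_le_norm (u - v) (pu - pv).
have := normr_ge0 (pu - pv); have := normr_ge0 (u - v); nra.
Qed.

Lemma strongly_monotone_norm_ge (lam : R) (A : H -> H) :
  strongly_monotone ip lam A -> forall x y, lam * `|x - y| <= `|A x - A y|.
Proof.
move=> smA x y.
have [->|xy_neq0] := eqVneq `|x - y| 0; first by rewrite mulr0 normr_ge0.
have xy_gt0 : 0 < `|x - y| by rewrite lt_neqAle eq_sym xy_neq0 normr_ge0.
rewrite -(ler_pM2r xy_gt0); have := smA x y.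
have := ip_le_norm (A x - A y) (x - y); rewrite expr2; lra.
Qed.

Lemma strongly_monotone_step_sqr (M : H -> H) (mu L r : R) (b : H) :
  strongly_monotone ip mu M -> lipschitz_with L M -> 0 <= r -> r * L ^+ 2 <= mu ->
  forall x y, `|(x - r *: (M x - b)) - (y - r *: (M y - b))| ^+ 2
                <= (1 - r * mu) * `|x - y| ^+ 2.
Proof.
move=> smM lipM r_ge0 rL x y.
rewrite (subrACA x) -scalerBr (subrACA (M x)) subrr subr0.
rewrite (sqr_normB (x - y)) sqr_normZ ipZr (ipC (x - y)).
have := smM x y; have := lipschitz_with_sqr lipM x y; have := sqr_ge0 `|x - y|.
set S := `|x - y| ^+ 2 => S_ge0 lipMxy smMxy.
have : r ^+ 2 * `|M x - M y| ^+ 2 <= r * mu * S.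
  rewrite expr2 -!mulrA ler_wpM2l //.
  by apply: le_trans (ler_wpM2l r_ge0 lipMxy) _; rewrite mulrA ler_wpM2r.
have : r * (mu * S) <= r * ip (M x - M y) (x - y) by rewrite ler_wpM2l.
lra.
Qed.

Lemma GVI_sol_unique (A F : H -> H) (C : set H) (gam : R) x1 x2 :
  0 < gam -> couple_strongly_monotone ip gam A F ->
  GVI_sol ip A F C x1 -> GVI_sol ip A F C x2 -> x1 = x2.
Proof.
move=> gam_gt0 smAF [C1 var1] [C2 var2].
have := var1 _ C2; have := var2 _ C1; have := smAF x1 x2.
rewrite -[F x2 - F x1]opprB ipNr ipBl => smAF12 var21 var12.
have : gam * `|x1 - x2| ^+ 2 <= 0 by lra.
rewrite pmulr_rle0 // => le0; apply/eqP.
by rewrite -subr_eq0 -normr_eq0 -sqrf_eq0 eq_le le0 sqr_ge0.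
Qed.

Section Residual.
Variables (C : set H) (A F P Ai : H -> H) (LA LF lam gam rho : R).
Hypotheses (P_proj : forall u, is_proj ip C u (P u)) (AiK : cancel Ai A).
Hypotheses (lipA : lipschitz_with LA A) (lipF : lipschitz_with LF F).
Hypotheses (lam_gt0 : 0 < lam) (smA : strongly_monotone ip lam A).
Hypothesis smAF : couple_strongly_monotone ip gam A F.
Hypothesis rho_gt0 : 0 < rho.
Local Notation G := (gvi_residual rho A F P).

Lemma gvi_residual_eq0 x : G x = 0 -> GVI_sol ip A F C x.
Proof.
move=> /eqP; rewrite subr_eq0 => /eqP PFx.
have [CFx FX_var] := P_proj (F x - rho *: A x); rewrite -PFx in CFx FX_var.
split=> // y Cy; have := FX_var _ Cy.
by rewrite addrAC subrr add0r ipNl ipZl oppr_le0 pmulr_rge0.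
Qed.

Lemma gvi_residual_norm_le x y :
  `|G x - G y| <= 2 * `|F x - F y| + rho * `|A x - A y|.
Proof.
have := proj_nonexpansive (P_proj (F x - rho *: A x)) (P_proj (F y - rho *: A y)).
rewrite /gvi_residual (subrACA (F x) (P _)) (subrACA (F x) (rho *: _)) -scalerBr.
have := ler_normB (F x - F y) (rho *: (A x - A y)).
have := ler_normB (F x - F y) (P (F x - rho *: A x) - P (F y - rho *: A y)).
rewrite normrZ gtr0_norm //; lra.
Qed.

Lemma gvi_residual_ip_ge x y :
  (rho * gam - LF ^+ 2) * `|x - y| ^+ 2 <= rho * ip (G x - G y) (A x - A y).
Proof.
have := proj_firmly_nonexpansive (P_proj (F x - rho *: A x)) (P_proj (F y - rho *: A y)).
rewrite /gvi_residual (subrACA (F x) (P _)) (subrACA (F x) (rho *: _)) -scalerBr.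
set f := F x - F y; set a := A x - A y.
set p := P (F x - rho *: A x) - P (F y - rho *: A y).
rewrite ipBl ipZl => firm.
have := ip_le_norm f p; have := lipschitz_with_sqr lipF x y; rewrite -/f.
have := smAF x y; rewrite -/f -/a (ipC a).
rewrite (ipBl f) [ip p a]ipC => smAFxy lipFxy cs.
have : rho * (gam * `|x - y| ^+ 2) <= rho * ip f a by rewrite ler_pM2l.
have := normr_ge0 f; have := normr_ge0 p; nra.
Qed.

Lemma gvi_residual_strongly_monotone : LF ^+ 2 <= rho * gam ->
  strongly_monotone ip ((rho * gam - LF ^+ 2) / (rho * (LA ^+ 2 + 1))) (G \o Ai).
Proof.
move=> LF_le w1 w2 /=; set x := Ai w1; set y := Ai w2.
have -> : w1 - w2 = A x - A y by rewrite !AiK.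
have k_gt0 : 0 < rho * (LA ^+ 2 + 1) by rewrite mulr_gt0 // ltr_pwDr ?sqr_ge0.
rewrite mulrAC ler_pdivrMr //.
have := gvi_residual_ip_ge x y; have := lipschitz_with_sqr lipA x y.
set S := `|x - y| ^+ 2; set gap := rho * gam - LF ^+ 2 => lipAxy ip_ge.
have gap_ge0 : 0 <= gap by rewrite subr_ge0.
have S_ge0 : 0 <= S by exact: sqr_ge0.
have : gap * `|A x - A y| ^+ 2 <= gap * ((LA ^+ 2 + 1) * S).
  by rewrite ler_wpM2l //; lra.
have := sqr_ge0 LA; nra.
Qed.

(* The absolute value is needed since [lipschitz_with] admits a negative
   constant (on the trivial space). *)
Lemma gvi_residual_lipschitz : lipschitz_with (2 * `|LF| / lam + rho) (G \o Ai).
Proof.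
move=> w1 w2 /=; set x := Ai w1; set y := Ai w2.
have -> : w1 - w2 = A x - A y by rewrite !AiK.
have Fxy : `|F x - F y| <= `|LF| / lam * `|A x - A y|.
  rewrite mulrAC ler_pdivlMr //.
  have lipFxy : `|F x - F y| <= `|LF| * `|x - y|.
    exact: le_trans (lipF x y) (ler_wpM2r (normr_ge0 _) (ler_norm LF)).
  apply: le_trans (ler_wpM2r (ltW lam_gt0) lipFxy) _.
  by rewrite -mulrA ler_wpM2l // mulrC strongly_monotone_norm_ge.
have := gvi_residual_norm_le x y; rewrite mulrDl; lra.
Qed.

End Residual.

End InnerProduct.

Section CompleteSpace.
Variables (R : realType) (H : completeNormedModType R) (ip : H -> H -> R).
Hypothesis hip : is_inner_product ip.

Lemma minimizing_seq_cvg (C : set H) (u : H) (d : R) (c : nat -> H) :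
  convex_set C -> (forall y, C y -> d <= `|u - y| ^+ 2) -> (forall n, C (c n)) ->
  (forall n, `|u - c n| ^+ 2 < d + n.+1%:R^-1) -> cvgn c.
Proof.
move=> cvC d_lb Cc c_min.
have c_close m n : `|c m - c n| ^+ 2 <= 2 * m.+1%:R^-1 + 2 * n.+1%:R^-1.
  have Cmid : C (2^-1 *: (c m + c n)).
    have half : 1 - 2^-1 = 2^-1 :> R by field.
    rewrite scalerDr -[X in _ + X *: _]half.
    by apply: mem_convex_comb => //; lra.
  have := parallelogram_midpoint hip u (c m) (c n).
  have := d_lb _ Cmid; have := c_min m; have := c_min n.
  by move: (m.+1%:R^-1) (n.+1%:R^-1) => em en; lra.
apply/cauchy_cvgP/cauchy_ballP => e e_gt0; near_simpl.
have e2_gt0 : 0 < e ^+ 2 / 4 by rewrite divr_gt0 // exprn_gt0.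
near=> m n; rewrite -ball_normE /=.
have : m.+1%:R^-1 < e ^+ 2 / 4 by near: m; exact: near_infty_natSinv_lt (PosNum e2_gt0).
have : n.+1%:R^-1 < e ^+ 2 / 4 by near: n; exact: near_infty_natSinv_lt (PosNum e2_gt0).
have := c_close m n; move: (m.+1%:R^-1) (n.+1%:R^-1) => em en.
have := normr_ge0 (c m - c n); nra.
Unshelve. all: by end_near.
Qed.

Lemma exists_nearest_point (C : set H) (u : H) :
  C !=set0 -> closed C -> convex_set C ->
  exists2 c, C c & forall y, C y -> `|u - c| <= `|u - y|.
Proof.
move=> [c0 Cc0] clC cvC.
pose D := [set `|u - c| ^+ 2 | c in C].
have D_inf : has_inf D.
  split; first by exists (`|u - c0| ^+ 2), c0.
  by exists 0 => _ [c _ <-]; exact: sqr_ge0.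
have D_lb y : C y -> inf D <= `|u - y| ^+ 2.
  by move=> Cy; apply: (ge_inf D_inf.2); exists y.
have c_ex n : exists c, C c /\ `|u - c| ^+ 2 < inf D + n.+1%:R^-1.
  have [|_ [c Cc <-] ?] := @inf_adherent R D n.+1%:R^-1 _ D_inf.
    by rewrite invr_gt0.
  by exists c.
have [c c_min] := choice c_ex.
have c_cvg : cvgn c.
  exact: minimizing_seq_cvg cvC D_lb (fun n => (c_min n).1) (fun n => (c_min n).2).
exists (limn c).
  by apply: (closed_cvg C clC _ _ c_cvg); apply: nearW => n; exact: (c_min n).1.
move=> y Cy; apply/ler_addgt0Pr => e e_gt0.
have dist_cvg : `|u - c n| @[n --> \oo] --> `|u - limn c|.
  by apply: cvg_norm; apply: cvgB => //; exact: cvg_cst.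
apply: (cvgr_to_le dist_cvg).
have e2_gt0 : 0 < e ^+ 2 by exact: exprn_gt0.
near=> n.
have : n.+1%:R^-1 < e ^+ 2 by near: n; exact: near_infty_natSinv_lt (PosNum e2_gt0).
have := (c_min n).2; have := D_lb _ Cy; move: (n.+1%:R^-1) => en.
have := normr_ge0 (u - c n); have := normr_ge0 (u - y); nra.
Unshelve. all: by end_near.
Qed.

Lemma exists_proj (C : set H) : C !=set0 -> closed C -> convex_set C ->
  forall u, exists c, is_proj ip C u c.
Proof.
move=> C0 clC cvC u; have [c Cc c_min] := exists_nearest_point u C0 clC cvC.
by exists c; exact: nearest_is_proj.
Qed.

Lemma contraction_fixed_point (f : H -> H) (q : R) : 0 <= q -> q < 1 ->
  (forall x y, `|f x - f y| <= q * `|x - y|) -> exists x, f x = x.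
Proof.
move=> q_ge0 q_lt1 f_contr.
have [|||p _ /esym] := @banach_fixed_point R H setT (totalfun f).
- by exists (NngNum q_ge0); split=> //= -[x y] _ /=; exact: f_contr.
- exact: closedT.
- by exists point.
by exists p.
Qed.

Lemma strongly_monotone_lipschitz_surj (M : H -> H) (mu L : R) :
  0 < mu -> strongly_monotone ip mu M -> lipschitz_with L M ->
  forall b, exists x, M x = b.
Proof.
move=> mu_gt0 smM lipM b.
pose r := mu / (L ^+ 2 + mu ^+ 2).
have K_gt0 : 0 < L ^+ 2 + mu ^+ 2 by rewrite ltr_wpDl ?sqr_ge0 ?exprn_gt0.
have r_gt0 : 0 < r by exact: divr_gt0.
have rL : r * L ^+ 2 <= mu.
  by rewrite mulrAC ler_pdivrMr // ler_pM2l // lerDl sqr_ge0.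
have rmu_le1 : r * mu <= 1.
  by rewrite mulrAC ler_pdivrMr // mul1r -expr2 lerDr sqr_ge0.
clearbody r.
have rmu_gt0 : 0 < r * mu by exact: mulr_gt0.
(* [(1 - t / 2) ^+ 2 >= 1 - t] turns the squared estimate into a contraction. *)
have contr x y : `|(x - r *: (M x - b)) - (y - r *: (M y - b))|
    <= (1 - r * mu / 2) * `|x - y|.
  rewrite -(@ler_pXn2r _ 2) ?nnegrE ?mulr_ge0 //; last lra.
  have := strongly_monotone_step_sqr hip b smM lipM (ltW r_gt0) rL x y.
  have := sqr_ge0 `|x - y|; rewrite exprMn; nra.
have [||x /eqP] := contraction_fixed_point _ _ contr; try lra.
rewrite subr_eq addrC -subr_eq subrr eq_sym scaler_eq0 gt_eqF //= subr_eq0.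
by exists x; apply/eqP.
Qed.

End CompleteSpace.

Theorem theorem2p2 (R : realType) (H : completeNormedModType R)
  (ip : H -> H -> R) (C : set H) (A F : H -> H) (LA LF lam gam : R) :
  is_inner_product ip ->
  C !=set0 -> closed C -> convex_set C ->
  lipschitz_with LA A -> lipschitz_with LF F ->
  0 < lam -> strongly_monotone ip lam A ->
  0 < gam -> couple_strongly_monotone ip gam A F ->
  exists! x : H, GVI_sol ip A F C x.
Proof.
move=> hip C0 clC cvC lipA lipF lam_gt0 smA gam_gt0 smAF.
have [P P_proj] := choice (exists_proj hip C0 clC cvC).
have [Ai AiK] := choice (strongly_monotone_lipschitz_surj hip lam_gt0 smA lipA).
pose rho := (LF ^+ 2 + 1) / gam.
have rho_gt0 : 0 < rho by rewrite divr_gt0 // ltr_wpDl ?sqr_ge0.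
have rho_gam : rho * gam - LF ^+ 2 = 1 by rewrite divfK ?gt_eqF // addrAC subrr add0r.
have LF_le : LF ^+ 2 <= rho * gam by rewrite -subr_ge0 rho_gam.
have mu_gt0 : 0 < (rho * gam - LF ^+ 2) / (rho * (LA ^+ 2 + 1)).
  by rewrite rho_gam divr_gt0 // mulr_gt0 // ltr_wpDl ?sqr_ge0.
have [w Gw0] := strongly_monotone_lipschitz_surj hip mu_gt0
  (gvi_residual_strongly_monotone hip P_proj AiK lipA lipF smAF rho_gt0 LF_le)
  (gvi_residual_lipschitz hip P_proj AiK lipF lam_gt0 smA rho_gt0) 0.
have w_sol : GVI_sol ip A F C (Ai w) by exact: gvi_residual_eq0 Gw0.
exists (Ai w); split=> // x x_sol.
exact (GVI_sol_unique hip gam_gt0 smAF w_sol x_sol).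
Qed.
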